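(* Suppose the p-values are conditionally super-uniform: for every $t$ with $\theta_t=0$, $\mathbb{P}(p_t\le U\mid\mathcal{F}_{t-1})\le U$ a.s. for every $\mathcal F_{t-1}$-measurable $[0,1]$-valued $U$. Fix $d\in(0,1]$. (a) If the $\mathcal{F}_{t-1}$-measurable testing levels satisfy, a.s. for every $t\ge1$, $\sum_{j=1}^t\frac{\alpha_j}{dR^{\mathrm d}_{j-1}+1}\le\alpha$, then $\mathrm{mem\text{-}FDR}(t)\le\alpha$ for all $t$. (b) Let $(\lambda_t)_{t\ge1}$ be $(0,1)$-valued with each $\lambda_t$ $\mathcal{F}_{t-1}$-measurable, and let $\mathrm{mem\text{-}}\widehat{\mathrm{FDP}}^{\mathrm{pS\text{-}RAI}}(t):=\sum_{j=1}^t\frac{\alpha_j}{dR^{\mathrm d}_{j-1}+1}\cdot\frac{\mathbb{1}\{p_j>\lambda_j\}}{1-\lambda_j}$. Then (i) $\mathbb{E}[\mathrm{mem\text{-}}\widehat{\mathrm{FDP}}^{\mathrm{pS\text{-}RAI}}(t)]\ge\mathbb{E}[\mathrm{mem\text{-}FDP}^*(t)]$ for all $t$, where $\mathrm{mem\text{-}FDP}^*(t)=\sum_{j\in\mathcal{H}_0(t)}\alpha_j/(dR^{\mathrm d}_{j-1}+1)$; and (ii) if the testing levels satisfy $\mathrm{mem\text{-}}\widehat{\mathrm{FDP}}^{\mathrm{pS\text{-}RAI}}(t)\le\alpha$ a.s. for every $t$, then $\mathrm{mem\text{-}FDR}(t)\le\alpha$ for all $t$.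
   Context: Let $\alpha\in(0,1)$ be a target level. Hypotheses are indexed by $t=1,2,\dots$; $\theta_t\in\{0,1\}$ is a fixed (non-random) indicator with $\theta_t=0$ iff the $t$-th null hypothesis is true. $p_1,p_2,\dots$ are $[0,1]$-valued random variables (p-values). Testing levels $\alpha_1,\alpha_2,\dots$ are $[0,1]$-valued random variables and the decisions are $\delta_t=\mathbb{1}\{p_t\le\alpha_t\}$. Let $\mathcal{F}_t=\sigma(\delta_1,\dots,\delta_t)$, $\mathcal{F}_0$ trivial; each $\alpha_t$ is required to be $\mathcal{F}_{t-1}$-measurable. $\mathcal{H}_0(t)=\{j\le t:\theta_j=0\}$. For a decay parameter $d\in(0,1]$, $R^{\mathrm d}_t=\sum_{j=1}^t d^{t-j}\delta_j$ with $R^{\mathrm d}_0=0$, and $\mathrm{mem\text{-}FDR}(t)=\mathbb{E}\big[\sum_{j\in\mathcal{H}_0(t)}d^{t-j}\delta_j\big/R^{\mathrm d}_t\big]$ with the convention $0/0=0$. *)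

From mathcomp Require Import all_boot all_order all_algebra.
From mathcomp Require Import all_classical all_reals all_analysis.
Set Implicit Arguments. Unset Strict Implicit. Unset Printing Implicit Defensive.
Import Order.TTheory GRing.Theory Num.Theory.
Local Open Scope classical_set_scope.
Local Open Scope ring_scope.

Section Defs.
Context {dT : measure_display} {T : measurableType dT} {R : realType}.

Definition delta (p alpha : nat -> T -> R) (t : nat) (w : T) : bool :=
  p t w <= alpha t w.

Definition dvec (p alpha : nat -> T -> R) (n : nat) (w : T) : nat -> bool :=
  fun j => ((0 < j <= n)%N && delta p alpha j w).

(* F_n = sigma(delta_1,...,delta_n): preimages of (arbitrary, since the
   range is finite/discrete) sets under the random vector (delta_1..delta_n) *)
Definition Fsig (p alpha : nat -> T -> R) (n : nat) : set (set T) :=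
  [set A | exists B : set (nat -> bool), A = dvec p alpha n @^-1` B].

Definition Fmeas (p alpha : nat -> T -> R) (n : nat) (U : T -> R) : Prop :=
  forall B : set R, measurable B -> Fsig p alpha n (U @^-1` B).

Definition Rdec (p alpha : nat -> T -> R) (dec : R) (t : nat) (w : T) : R :=
  \sum_(1 <= j < t.+1) dec ^+ (t - j) * (delta p alpha j w)%:R.

(* theta j = true iff the j-th null is false; H_0 = {j | ~~ theta j} *)
(* mem-FDP(t); division by 0 gives 0 in MathComp (0/0 = 0 convention) *)
Definition memFDP (p alpha : nat -> T -> R) (theta : nat -> bool) (dec : R)
  (t : nat) (w : T) : R :=
  (\sum_(1 <= j < t.+1 | ~~ theta j) dec ^+ (t - j) * (delta p alpha j w)%:R)
  / Rdec p alpha dec t w.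

Definition memLevelSum (p alpha : nat -> T -> R) (dec : R) (t : nat) (w : T) : R :=
  \sum_(1 <= j < t.+1) alpha j w / (dec * Rdec p alpha dec j.-1 w + 1).

Definition memFDPstar (p alpha : nat -> T -> R) (theta : nat -> bool) (dec : R)
  (t : nat) (w : T) : R :=
  \sum_(1 <= j < t.+1 | ~~ theta j) alpha j w / (dec * Rdec p alpha dec j.-1 w + 1).

Definition memFDPhat (p alpha lambda : nat -> T -> R) (dec : R) (t : nat) (w : T) : R :=
  \sum_(1 <= j < t.+1) alpha j w / (dec * Rdec p alpha dec j.-1 w + 1)
     * ((lambda j w < p j w)%R%:R / (1 - lambda j w)).

End Defs.

From mathcomp Require Import all_boot all_order all_algebra.
From mathcomp Require Import all_classical all_reals all_analysis.
From mathcomp Require Import measurable_realfun lra.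
Import Order.TTheory GRing.Theory Num.Theory.
Local Open Scope classical_set_scope.
Local Open Scope ring_scope.

(* The sigma-algebra F_n generated by the first n decisions is generated by the
   finite partition of the sample space into "atoms" on which these decisions are
   fixed, and an F_n-measurable function is just a function constant on atoms.
   Integrals therefore split into finite sums over atoms, on each of which every
   F_{j-1}-measurable quantity is a constant and super-uniformity reads
   P(A ∩ {p_j <= U}) <= U P(A).  Taking U = alpha_j gives
   E[delta_j / (d R_{j-1} + 1)] <= E[alpha_j / (d R_{j-1} + 1)] for every null j,
   and since d^{t-j} delta_j / R_t <= delta_j / (d R_{j-1} + 1) pointwise, the
   mem-FDR is at most E[mem-FDP^*(t)]; this is at most alpha under the
   hypothesis of (a), and under that of (b)(ii) by (b)(i).  Taking U = lambda_j
   gives (1 - lambda_j) P(A) <= P(A ∩ {p_j > lambda_j}), which yields (b)(i). *)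

Lemma index_iota1_gt0 j n : j \in index_iota 1 n -> (0 < j)%N.
Proof. by rewrite mem_index_iota => /andP[]. Qed.

Section RealFunctions.
Context {dT : measure_display} {T : measurableType dT} {R : realType}.

Lemma measurable_set_ler {f g : T -> R} :
  measurable_fun setT f -> measurable_fun setT g -> measurable [set w | f w <= g w].
Proof. by move=> mf mg; rewrite -[X in measurable X]setTI; exact: measurable_fun_ler. Qed.

Lemma measurable_set_ltr {f g : T -> R} :
  measurable_fun setT f -> measurable_fun setT g -> measurable [set w | f w < g w].
Proof. by move=> mf mg; rewrite -[X in measurable X]setTI; exact: measurable_fun_ltr. Qed.

Lemma indic_bool (b : T -> bool) w : \1_[set w | b w] w = (b w)%:R :> R.
Proof.
by rewrite indicE; case: (boolP (b w)) => bw; [rewrite mem_set|rewrite memNset //=; apply/negP].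
Qed.

End RealFunctions.

Section IntegralFacts.
Context {dT : measure_display} {T : measurableType dT} {R : realType}.
Variable mu : {measure set T -> \bar R}.

Lemma measurable_sum_cond (I : eqType) (s : seq I) (P : pred I) (F : I -> T -> R) :
  (forall j, j \in s -> P j -> measurable_fun setT (F j)) ->
  measurable_fun setT (fun w => \sum_(j <- s | P j) F j w).
Proof.
move=> mF.
rewrite (_ : (fun w => _) = fun w => \sum_(j <- s) if (j \in s) && P j then F j w else 0).
  apply: measurable_sum => j.
  case: (boolP ((j \in s) && P j)) => [/andP[js Pj]|_]; [exact: mF|exact: measurable_cst].
by apply/funext => w; rewrite big_seq_cond big_mkcond.
Qed.

Lemma ge0_integral_sum_cond (I : eqType) (s : seq I) (P : pred I) (F : I -> T -> R) :
  (forall j, j \in s -> P j -> measurable_fun setT (F j)) ->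
  (forall j w, j \in s -> P j -> 0 <= F j w) ->
  (\int[mu]_w (\sum_(j <- s | P j) F j w)%:E =
   \sum_(j <- s | P j) \int[mu]_w (F j w)%:E)%E.
Proof.
move=> mF F0.
under eq_integral do rewrite big_seq_cond big_mkcond -sumEFin.
rewrite ge0_integral_sum //; last 2 first.
- move=> j; apply/measurable_EFinP.
  case: (boolP ((j \in s) && P j)) => [/andP[js Pj]|_]; [exact: mF|exact: measurable_cst].
- by move=> j w _; case: (boolP ((j \in s) && P j)) => [/andP[js Pj]|_]; rewrite lee_fin ?F0.
rewrite [RHS]big_seq_cond [RHS]big_mkcond; apply: eq_bigr => j _.
by case: (boolP ((j \in s) && P j)) => // _; rewrite integral0_eq.
Qed.

Lemma integral_le_ae_bound (P : probability T R) (f : T -> R) (c : R) :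
  0 <= c -> measurable_fun setT f -> (forall w, 0 <= f w) ->
  {ae P, forall w, f w <= c} -> (\int[P]_w (f w)%:E <= c%:E)%E.
Proof.
move=> c0 mf f0 fc; rewrite -[leRHS]mule1 -(probability_setT P) -integral_cst //.
apply: ae_ge0_le_integral => //; first by move=> w _; rewrite lee_fin.
  exact/measurable_EFinP.
by apply: filterS fc => w fwc _; rewrite lee_fin.
Qed.

End IntegralFacts.

Section DecisionAtoms.
Context {dT : measure_display} {T : measurableType dT} {R : realType}.
Variables p alpha : nat -> T -> R.
Hypothesis mdelta : forall j, (0 < j)%N -> measurable_fun setT (delta p alpha j).

Definition decisions n w : {ffun 'I_n -> bool} := [ffun i : 'I_n => delta p alpha i.+1 w].

Definition atom n (v : {ffun 'I_n -> bool}) : set T := decisions n @^-1` [set v].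

(* [atom_const n f] says that [f] factors through the first [n] decisions; by
   [Fmeas_atom_const] and [atom_const_measurable] this amounts to
   F_n-measurability. *)
Definition atom_const n (f : T -> R) :=
  forall w w', decisions n w = decisions n w' -> f w = f w'.

Lemma measurable_atom n v : measurable (atom n v).
Proof.
rewrite (_ : atom n v = \bigcap_(i in [set: 'I_n]) (delta p alpha i.+1 @^-1` [set v i])).
  apply: fin_bigcap_measurable => [|i _]; first exact: finite_finset.
  by rewrite -[X in measurable X]setTI; apply: mdelta.
apply/seteqP; split => w /=; first by move=> <- i _; rewrite ffunE.
by move=> Hv; apply/ffunP => i; rewrite ffunE Hv.
Qed.

Lemma delta_decisions {n j w w'} : (0 < j <= n)%N ->
  decisions n w = decisions n w' -> delta p alpha j w = delta p alpha j w'.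
Proof.
case: j => // j /andP[_ jn] /(congr1 (fun f : {ffun 'I_n -> bool} => f (Ordinal jn))).
by rewrite !ffunE.
Qed.

Lemma measurable_delta j : (0 < j)%N -> measurable [set w | delta p alpha j w].
Proof. by move=> j0; rewrite -[X in measurable X]setTI; exact: mdelta. Qed.

Lemma atom_const_delta {j} : (0 < j)%N -> atom_const j (fun w => (delta p alpha j w)%:R).
Proof. by move=> j0 w w' e; rewrite (@delta_decisions j j w w') // j0 leqnn. Qed.

Lemma atom_constW {m n f} : (m <= n)%N -> atom_const m f -> atom_const n f.
Proof.
move=> mn fm w w' e; apply: fm; apply/ffunP => i; rewrite !ffunE.
by apply: (@delta_decisions n) => //; rewrite (leq_trans (ltn_ord i)).
Qed.

Lemma atom_const1 n (g : R -> R) f : atom_const n f -> atom_const n (fun w => g (f w)).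
Proof. by move=> fc w w' e; rewrite (fc _ _ e). Qed.

Lemma Fmeas_atom_const {n U} : Fmeas p alpha n U -> atom_const n U.
Proof.
move=> FU w w' e; have [B UB] := FU [set U w] (measurable_set1 _).
have dvecE : dvec p alpha n w = dvec p alpha n w'.
  apply/funext => j; rewrite /dvec; case: (boolP (0 < j <= n)%N) => //= jn.
  exact: delta_decisions e.
have UwB : (dvec p alpha n @^-1` B) w by rewrite -UB.
have : (U @^-1` [set U w]) w' by rewrite UB /preimage /= -dvecE.
by rewrite /preimage /= => ->.
Qed.

Lemma Fsig_atom n v : Fsig p alpha n (atom n v).
Proof.
exists [set x : nat -> bool | forall i : 'I_n, x i.+1 = v i].
apply/seteqP; split => w /=.
  by move=> <- i; rewrite /dvec ffunE ltn_ord.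
by move=> Hv; apply/ffunP => i; rewrite ffunE -Hv /dvec ltn_ord.
Qed.

Lemma atom_const_measurable n f : atom_const n f -> measurable_fun setT f.
Proof.
move=> fc _ B _; rewrite setTI.
rewrite (_ : f @^-1` B = \bigcup_(v in [set v | exists2 w, decisions n w = v & B (f w)])
                          atom n v).
  by apply: fin_bigcup_measurable => [|v _]; [exact: finite_finset|exact: measurable_atom].
apply/seteqP; split => w /=; first by move=> Bw; exists (decisions n w) => //; exists w.
by move=> [v [w0 <- Bw0] e]; rewrite (fc w w0).
Qed.

Section DecayedRejections.
Variable dec : R.
Hypothesis dec_ge0 : 0 <= dec.

Lemma Rdec_ge0 t w : 0 <= Rdec p alpha dec t w.
Proof. by apply: sumr_ge0 => j _; rewrite mulr_ge0 ?exprn_ge0. Qed.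

Lemma RdecS t w :
  Rdec p alpha dec t.+1 w = dec * Rdec p alpha dec t w + (delta p alpha t.+1 w)%:R.
Proof.
rewrite /Rdec big_nat_recr //= subnn expr0 mul1r big_distrr /=; congr (_ + _).
by apply: eq_big_nat => j /andP[_ jt]; rewrite mulrA -exprS subSn.
Qed.

Lemma Rdec_decay j t w : (j <= t)%N ->
  dec ^+ (t - j) * Rdec p alpha dec j w <= Rdec p alpha dec t w.
Proof.
elim: t => [|t IH]; first by rewrite leqn0 => /eqP ->; rewrite expr0 mul1r.
rewrite leq_eqVlt => /predU1P[->|jt]; first by rewrite subnn expr0 mul1r.
rewrite RdecS subSn // exprS -mulrA (le_trans (ler_wpM2l dec_ge0 (IH jt))) //.
by rewrite lerDl ler0n.
Qed.

Lemma Rdec_atom_const m n : (m <= n)%N -> atom_const n (Rdec p alpha dec m).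
Proof.
move=> mn w w' e; apply: eq_big_nat => j /andP[j1 jm].
by rewrite (@delta_decisions n j w w') // j1 (leq_trans _ mn) // -ltnS.
Qed.

End DecayedRejections.

Section AtomIntegrals.
Variable mu : {measure set T -> \bar R}.
Local Open Scope ereal_scope.

Lemma integral_atoms n (f : T -> R) : measurable_fun setT f -> (forall w, 0 <= f w)%R ->
  \int[mu]_w (f w)%:E = \sum_(v : {ffun 'I_n -> bool}) \int[mu]_w (\1_(atom n v) w * f w)%:E.
Proof.
move=> mf f0; rewrite -ge0_integral_sum //; last 2 first.
- move=> v; apply/measurable_EFinP/measurable_funM => //.
  exact/measurable_indic/measurable_atom.
- by move=> v w _; rewrite lee_fin mulr_ge0 // indicE ler0n.
apply: eq_integral => w _; rewrite sumEFin -big_distrl /= (bigD1 (decisions n w)) //=.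
rewrite big1 ?addr0 ?indicE ?mem_set ?mul1r // => v wv.
by rewrite indicE memNset ?mul0r //= => e; rewrite e eqxx in wv.
Qed.

Lemma integral_atom_const {n v w0} {U : T -> R} : atom_const n U -> atom n v w0 ->
  \int[mu]_(w in atom n v) (U w)%:E = (U w0)%:E * mu (atom n v).
Proof.
move=> Uc vw0; rewrite -integral_cst; last exact: measurable_atom.
by apply: eq_integral => w /[!inE] vw; rewrite (Uc w w0) // vw vw0.
Qed.

Lemma integral_atom_indic {n v w0} {g : T -> R} {S : set T} :
  atom_const n g -> (forall w, 0 <= g w)%R -> measurable S -> atom n v w0 ->
  \int[mu]_w (\1_(atom n v) w * (g w * \1_S w))%:E = (g w0)%:E * mu (S `&` atom n v).
Proof.
move=> gc g0 mS vw0; have mSv := measurableI _ _ mS (measurable_atom n v).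
transitivity (\int[mu]_w ((g w0)%:E * (\1_(S `&` atom n v) w)%:E)).
  apply: eq_integral => w _; rewrite -EFinM; congr _%:E.
  rewrite !indicE in_setI; case: (boolP (w \in atom n v)) => vw /=; last first.
    by rewrite andbF !mul0r mulr0.
  by rewrite andbT mul1r (gc w w0) // (set_mem vw) vw0.
rewrite ge0_integralZl_EFin ?integral_indic ?setIT //.
exact/measurable_EFinP/measurable_indic.
Qed.

Lemma le_integral_atomwise n (g1 g2 : T -> R) (S1 S2 : set T) :
  atom_const n g1 -> (forall w, 0 <= g1 w)%R -> measurable S1 ->
  atom_const n g2 -> (forall w, 0 <= g2 w)%R -> measurable S2 ->
  (forall v w0, atom n v w0 ->
     (g1 w0)%:E * mu (S1 `&` atom n v) <= (g2 w0)%:E * mu (S2 `&` atom n v)) ->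
  \int[mu]_w (g1 w * \1_S1 w)%:E <= \int[mu]_w (g2 w * \1_S2 w)%:E.
Proof.
move=> g1c g10 mS1 g2c g20 mS2 le_atoms.
have mgS (g : T -> R) (S : set T) : atom_const n g -> measurable S ->
    measurable_fun setT (fun w => g w * \1_S w)%R.
  move=> gc mS; apply: measurable_funM; first exact: atom_const_measurable gc.
  exact: measurable_indic.
have gS0 (g : T -> R) (S : set T) : (forall w, 0 <= g w)%R -> forall w, (0 <= g w * \1_S w)%R.
  by move=> g0 w; rewrite mulr_ge0 // indicE ler0n.
rewrite (integral_atoms n _ (mgS _ _ g1c mS1) (gS0 _ S1 g10)).
rewrite (integral_atoms n _ (mgS _ _ g2c mS2) (gS0 _ S2 g20)).
apply: lee_sum => v _; have [[w0 vw0]|nv] := pselect (exists w0, atom n v w0).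
  rewrite (integral_atom_indic g1c g10 mS1 vw0).
  by rewrite (integral_atom_indic g2c g20 mS2 vw0); exact: le_atoms.
rewrite [X in X <= _](_ : _ = 0) ?integral_ge0 // => [w _|].
  by rewrite lee_fin mulr_ge0 ?gS0 // indicE ler0n.
rewrite -[RHS](integral0 mu setT); apply: eq_integral => w _.
by rewrite indicE memNset ?mul0r // => vw; apply: nv; exists w.
Qed.

End AtomIntegrals.

Section Proposition5.
Variable P : probability T R.
Variables (dec : R) (theta : nat -> bool).
Hypothesis dec_ge0 : 0 <= dec.
Hypothesis alpha01 : forall t, (0 < t)%N -> forall w, 0 <= alpha t w <= 1.
Hypothesis Fmeas_alpha : forall t, (0 < t)%N -> Fmeas p alpha t.-1 (alpha t).
Hypothesis superuniform : forall t, (0 < t)%N -> ~~ theta t ->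
  forall U : T -> R, Fmeas p alpha t.-1 U -> (forall w, 0 <= U w <= 1) ->
  forall A, Fsig p alpha t.-1 A ->
  (P (A `&` [set w | (p t w <= U w)%R]) <= \int[P]_(w in A) (U w)%:E)%E.

Definition level_den j w := dec * Rdec p alpha dec j.-1 w + 1.

Definition memlevel j w := alpha j w / level_den j w.

Lemma level_den_gt0 j w : 0 < level_den j w.
Proof. by rewrite ltr_wpDl // mulr_ge0 // Rdec_ge0. Qed.

Lemma level_den_atom_const j : atom_const j.-1 (level_den j).
Proof. by move=> w w' e; rewrite /level_den (@Rdec_atom_const dec _ _ (leqnn _) w w' e). Qed.

Lemma memlevel_ge0 j w : (0 < j)%N -> 0 <= memlevel j w.
Proof.
by move=> j0; rewrite divr_ge0 ?(ltW (level_den_gt0 _ _)) //; case/andP: (alpha01 j j0 w).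
Qed.

Lemma memlevel_atom_const {j} : (0 < j)%N -> atom_const j.-1 (memlevel j).
Proof.
move=> j0 w w' e; rewrite /memlevel (level_den_atom_const j w w' e).
by rewrite (Fmeas_atom_const (Fmeas_alpha j j0) w w' e).
Qed.

Lemma superuniform_atom {j v w0} {U : T -> R} : (0 < j)%N -> ~~ theta j ->
  Fmeas p alpha j.-1 U -> (forall w, 0 <= U w <= 1) -> atom j.-1 v w0 ->
  (P (atom j.-1 v `&` [set w | (p j w <= U w)%R]) <= (U w0)%:E * P (atom j.-1 v))%E.
Proof.
move=> j0 nj FU U01 vw0; rewrite -(integral_atom_const P (Fmeas_atom_const FU) vw0).
exact/superuniform/Fsig_atom.
Qed.

Lemma integral_rejection_le_memlevel j : (0 < j)%N -> ~~ theta j ->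
  (\int[P]_w ((delta p alpha j w)%:R / level_den j w)%:E <= \int[P]_w (memlevel j w)%:E)%E.
Proof.
move=> j0 nj.
rewrite (eq_integral (fun w => ((level_den j w)^-1 * \1_[set w | delta p alpha j w] w)%:E));
  last by move=> w _; rewrite indic_bool mulrC.
rewrite [leRHS](eq_integral (fun w => (memlevel j w * \1_setT w)%:E));
  last by move=> w _; rewrite indicT /= mulr1.
apply: (@le_integral_atomwise P j.-1) => //.
- exact/atom_const1/level_den_atom_const.
- by move=> w; rewrite invr_ge0 ltW ?level_den_gt0.
- exact: measurable_delta.
- exact: memlevel_atom_const.
- by move=> w; exact: memlevel_ge0.
move=> v w0 vw0; rewrite setTI /memlevel mulrC EFinM -muleA setIC.
apply: lee_wpmul2l; first by rewrite lee_fin invr_ge0 ltW ?level_den_gt0.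
exact: superuniform_atom j0 nj (Fmeas_alpha j j0) (alpha01 j j0) vw0.
Qed.

Lemma measurable_memlevel j : (0 < j)%N -> measurable_fun setT (memlevel j).
Proof. by move=> j0; exact/atom_const_measurable/memlevel_atom_const. Qed.

Lemma memFDPstarE t w :
  memFDPstar p alpha theta dec t w = \sum_(1 <= j < t.+1 | ~~ theta j) memlevel j w.
Proof. by []. Qed.

Lemma memFDPstar_ge0 t w : 0 <= memFDPstar p alpha theta dec t w.
Proof.
rewrite memFDPstarE big_seq_cond; apply: sumr_ge0 => j.
by move=> /andP[/index_iota1_gt0 j0 _]; exact: memlevel_ge0.
Qed.

Lemma measurable_memFDPstar t : measurable_fun setT (memFDPstar p alpha theta dec t).
Proof.
apply: measurable_sum_cond => j /index_iota1_gt0 j0 _.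
exact: measurable_memlevel.
Qed.

Lemma Rdec_level_den {j w} : (0 < j)%N -> delta p alpha j w -> Rdec p alpha dec j w = level_den j w.
Proof. by case: j => // j _ dj; rewrite RdecS dj. Qed.

Lemma memFDP_ge0 t w : 0 <= memFDP p alpha theta dec t w.
Proof.
rewrite divr_ge0 ?Rdec_ge0 //; apply: sumr_ge0 => j _.
by rewrite mulr_ge0 ?ler0n ?exprn_ge0.
Qed.

Lemma memFDP_atom_const t : atom_const t (memFDP p alpha theta dec t).
Proof.
move=> w w' e; rewrite /memFDP (@Rdec_atom_const dec t t (leqnn _) w w' e).
congr (_ / _); rewrite big_seq_cond [RHS]big_seq_cond; apply: eq_bigr => j.
by rewrite mem_index_iota => /andP[jt _]; rewrite (delta_decisions jt e).
Qed.

Lemma memFDP_le_null_rejections t w : memFDP p alpha theta dec t w <=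
  \sum_(1 <= j < t.+1 | ~~ theta j) (delta p alpha j w)%:R / level_den j w.
Proof.
rewrite /memFDP; have [->|Rt0] := eqVneq (Rdec p alpha dec t w) 0.
  rewrite invr0 mulr0; apply: sumr_ge0 => j _.
  by rewrite divr_ge0 ?ler0n ?(ltW (level_den_gt0 _ _)).
have Rt : 0 < Rdec p alpha dec t w by rewrite lt0r Rt0 Rdec_ge0.
rewrite mulr_suml big_seq_cond [leRHS]big_seq_cond; apply: ler_sum => j.
rewrite mem_index_iota => /andP[/andP[j0 jt] _].
case dj: (delta p alpha j w); last by rewrite mulr0 !mul0r.
(* A rejection at [j] makes [R_j = d R_{j-1} + 1], and [R_t >= d^(t-j) R_j]. *)
rewrite mulr1 mul1r ler_pdivrMr // ler_pdivlMl ?level_den_gt0 // mulrC -(Rdec_level_den j0 dj).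
exact: Rdec_decay.
Qed.

Lemma integral_memFDP_le_memFDPstar t :
  (\int[P]_w (memFDP p alpha theta dec t w)%:E <=
   \int[P]_w (memFDPstar p alpha theta dec t w)%:E)%E.
Proof.
pose rej j w := (delta p alpha j w)%:R / level_den j w.
have rej_ge0 j w : 0 <= rej j w by rewrite divr_ge0 ?ler0n ?(ltW (level_den_gt0 _ _)).
have mrej j : (0 < j)%N -> measurable_fun setT (rej j).
  move=> j0; apply: (@atom_const_measurable j) => w w' e.
  rewrite /rej (atom_const_delta j0 w w' e).
  by rewrite (atom_constW (leq_pred j) (level_den_atom_const j) w w' e).
apply: (@le_trans _ _ (\int[P]_w (\sum_(1 <= j < t.+1 | ~~ theta j) rej j w)%:E)%E).
  apply: ge0_le_integral => //.
  - by move=> w _; rewrite lee_fin memFDP_ge0.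
  - exact/measurable_EFinP/atom_const_measurable/memFDP_atom_const.
  - apply/measurable_EFinP/measurable_sum_cond => j /index_iota1_gt0 j0 _.
    exact: mrej.
  - by move=> w _; rewrite lee_fin memFDP_le_null_rejections.
under [leRHS]eq_integral do rewrite memFDPstarE.
rewrite ge0_integral_sum_cond => [|j /index_iota1_gt0 j0 _|j w _ _] //;
  last exact: mrej.
rewrite ge0_integral_sum_cond => [|j /index_iota1_gt0 j0 _|j w /index_iota1_gt0 j0 _];
  [|exact: measurable_memlevel|exact: memlevel_ge0].
rewrite big_seq_cond [leRHS]big_seq_cond; apply: lee_sum => j.
move=> /andP[/index_iota1_gt0 j0 nj].
exact: integral_rejection_le_memlevel.
Qed.

Lemma memFDR_le_of_memFDPstar alpha0 : 0 <= alpha0 ->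
  (forall t, (0 < t)%N ->
     (\int[P]_w (memFDPstar p alpha theta dec t w)%:E <= alpha0%:E)%E) ->
  forall t, (\int[P]_w (memFDP p alpha theta dec t w)%:E <= alpha0%:E)%E.
Proof.
move=> a0 star_le [|t]; last exact: le_trans (integral_memFDP_le_memFDPstar _) (star_le _ _).
by rewrite integral0_eq ?lee_fin // => w _; rewrite /memFDP big_geq // mul0r.
Qed.

Lemma memFDR_le_of_memLevelSum alpha0 : 0 <= alpha0 ->
  (forall t, (0 < t)%N -> {ae P, forall w, memLevelSum p alpha dec t w <= alpha0}) ->
  forall t, (\int[P]_w (memFDP p alpha theta dec t w)%:E <= alpha0%:E)%E.
Proof.
move=> a0 bound; apply: memFDR_le_of_memFDPstar => // t t0.
apply: integral_le_ae_bound => //; [exact: measurable_memFDPstar|exact: memFDPstar_ge0|].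
apply: filterS (bound t t0) => w; apply: le_trans.
rewrite memFDPstarE [leRHS](bigID (fun j => ~~ theta j)) /= lerDl big_seq_cond.
apply: sumr_ge0 => j /andP[/index_iota1_gt0 j0 _].
exact: memlevel_ge0.
Qed.

Section RAI.
Variable lambda : nat -> T -> R.
Hypothesis measurable_p : forall t, (0 < t)%N -> measurable_fun setT (p t).
Hypothesis measurable_lambda : forall t, (0 < t)%N -> measurable_fun setT (lambda t).
Hypothesis lambda01 : forall t, (0 < t)%N -> forall w, 0 < lambda t w < 1.
Hypothesis Fmeas_lambda : forall t, (0 < t)%N -> Fmeas p alpha t.-1 (lambda t).

Definition RAI_weight j w := memlevel j w / (1 - lambda j w).

Definition memFDPhat_term j w :=
  memlevel j w * ((lambda j w < p j w)%R%:R / (1 - lambda j w)).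

Lemma memFDPhatE t w :
  memFDPhat p alpha lambda dec t w = \sum_(1 <= j < t.+1) memFDPhat_term j w.
Proof. by []. Qed.

Lemma memFDPhat_termE j w :
  memFDPhat_term j w = RAI_weight j w * \1_[set w | lambda j w < p j w] w.
Proof. by rewrite /memFDPhat_term indic_bool mulrA mulrAC. Qed.

Lemma RAI_weight_ge0 j w : (0 < j)%N -> 0 <= RAI_weight j w.
Proof.
move=> j0; rewrite divr_ge0 ?memlevel_ge0 // subr_ge0.
by case/andP: (lambda01 j j0 w) => _ /ltW.
Qed.

Lemma RAI_weight_atom_const j : (0 < j)%N -> atom_const j.-1 (RAI_weight j).
Proof.
move=> j0 w w' e; rewrite /RAI_weight (memlevel_atom_const j0 w w' e).
by rewrite (Fmeas_atom_const (Fmeas_lambda j j0) w w' e).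
Qed.

Lemma measurable_lambda_lt_p {j} : (0 < j)%N -> measurable [set w | lambda j w < p j w].
Proof. by move=> j0; exact: measurable_set_ltr (measurable_lambda j j0) (measurable_p j j0). Qed.

Lemma measurable_memFDPhat_term j : (0 < j)%N -> measurable_fun setT (memFDPhat_term j).
Proof.
move=> j0; rewrite (funext (memFDPhat_termE j)).
apply: measurable_funM; first exact/atom_const_measurable/RAI_weight_atom_const.
exact/measurable_indic/measurable_lambda_lt_p.
Qed.

Lemma memFDPhat_term_ge0 j w : (0 < j)%N -> 0 <= memFDPhat_term j w.
Proof. by move=> j0; rewrite memFDPhat_termE mulr_ge0 ?RAI_weight_ge0 // indicE ler0n. Qed.

Lemma integral_memlevel_le_memFDPhat_term j : (0 < j)%N -> ~~ theta j ->
  (\int[P]_w (memlevel j w)%:E <= \int[P]_w (memFDPhat_term j w)%:E)%E.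
Proof.
move=> j0 nj; set S := [set w | lambda j w < p j w].
have mS : measurable S := measurable_lambda_lt_p j0.
rewrite [leLHS](eq_integral (fun w => (memlevel j w * \1_setT w)%:E));
  last by move=> w _; rewrite indicT /= mulr1.
rewrite [leRHS](eq_integral (fun w => (RAI_weight j w * \1_S w)%:E));
  last by move=> w _; rewrite memFDPhat_termE.
apply: (@le_integral_atomwise P j.-1) => //.
- exact: memlevel_atom_const.
- by move=> w; exact: memlevel_ge0.
- exact: RAI_weight_atom_const.
- by move=> w; exact: RAI_weight_ge0.
move=> v w0 vw0; set A := atom j.-1 v; set B := [set w | (p j w <= lambda j w)%R].
have mA : measurable A := measurable_atom j.-1 v.
have mB : measurable B := measurable_set_ler (measurable_p j j0) (measurable_lambda j j0).
have l01 w : 0 <= lambda j w <= 1 by case/andP: (lambda01 j j0 w) => /ltW -> /ltW ->.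
have AS : A `\` S = A `&` B.
  apply/seteqP; split => w; rewrite /S /B /= => -[Aw pl]; split => //.
    by rewrite leNgt; exact/negP.
  by apply/negP; rewrite -leNgt.
have PA : P A = (P (A `&` B) + P (A `&` S))%E by rewrite -AS; exact: measureDI.
have su : (P (A `&` B) <= (lambda j w0)%:E * P A)%E :=
  superuniform_atom j0 nj (Fmeas_lambda j j0) l01 vw0.
suff : ((memlevel j w0)%:E * P A <= (RAI_weight j w0)%:E * P (A `&` S))%E.
  by rewrite setTI [S `&` A]setIC.
rewrite PA in su *.
pose x := fine (P (A `&` B)); pose y := fine (P (A `&` S)).
have Px : P (A `&` B) = x%:E by rewrite fineK // fin_num_measure //; exact: measurableI.
have Py : P (A `&` S) = y%:E by rewrite fineK // fin_num_measure //; exact: measurableI.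
move: su; rewrite Px Py -EFinD -!EFinM !lee_fin => su.
have l1 : 0 < 1 - lambda j w0 by rewrite subr_gt0; case/andP: (lambda01 j j0 w0).
have m0 := memlevel_ge0 j w0 j0.
(* [x <= lambda (x + y)] is [(1 - lambda) (x + y) <= y]. *)
by rewrite /RAI_weight [leRHS]mulrAC ler_pdivlMr //; nra.
Qed.

Lemma integral_memFDPstar_le_memFDPhat t :
  (\int[P]_w (memFDPstar p alpha theta dec t w)%:E <=
   \int[P]_w (memFDPhat p alpha lambda dec t w)%:E)%E.
Proof.
under eq_integral do rewrite memFDPstarE.
under [leRHS]eq_integral do rewrite memFDPhatE.
rewrite ge0_integral_sum_cond => [|j /index_iota1_gt0 j0 _|j w /index_iota1_gt0 j0 _];
  [|exact: measurable_memlevel|exact: memlevel_ge0].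
rewrite ge0_integral_sum_cond => [|j /index_iota1_gt0 j0 _|j w /index_iota1_gt0 j0 _];
  [|exact: measurable_memFDPhat_term|exact: memFDPhat_term_ge0].
apply: (@le_trans _ _ (\sum_(1 <= j < t.+1 | ~~ theta j)
                        \int[P]_w (memFDPhat_term j w)%:E)%E).
  rewrite big_seq_cond [leRHS]big_seq_cond; apply: lee_sum => j.
  move=> /andP[/index_iota1_gt0 j0 nj].
  exact: integral_memlevel_le_memFDPhat_term.
rewrite [leRHS](bigID (fun j => ~~ theta j)) /= leeDl // big_seq_cond.
apply: sume_ge0 => j /andP[/index_iota1_gt0 j0 _].
by apply: integral_ge0 => w _; rewrite lee_fin memFDPhat_term_ge0.
Qed.

Lemma memFDR_le_of_memFDPhat alpha0 : 0 <= alpha0 ->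
  (forall t, (0 < t)%N -> {ae P, forall w, memFDPhat p alpha lambda dec t w <= alpha0}) ->
  forall t, (\int[P]_w (memFDP p alpha theta dec t w)%:E <= alpha0%:E)%E.
Proof.
move=> a0 bound; apply: memFDR_le_of_memFDPstar => // t t0.
apply: le_trans (integral_memFDPstar_le_memFDPhat t) _.
apply: integral_le_ae_bound => //; last exact: bound.
  apply: measurable_sum_cond => j /index_iota1_gt0 j0 _.
  exact: measurable_memFDPhat_term.
move=> w; rewrite memFDPhatE big_seq; apply: sumr_ge0 => j.
by move=> /index_iota1_gt0 j0; exact: memFDPhat_term_ge0.
Qed.

End RAI.

End Proposition5.

End DecisionAtoms.

Theorem proposition5 (dT : measure_display) (T : measurableType dT) (R : realType)
  (P : probability T R) (alpha0 dec : R) (theta : nat -> bool)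
  (p alpha : nat -> T -> R) :
  0 < alpha0 < 1 ->
  0 < dec <= 1 ->
  (forall t, (0 < t)%N -> measurable_fun setT (p t)) ->
  (forall t, (0 < t)%N -> forall w, 0 <= p t w <= 1) ->
  (forall t, (0 < t)%N -> measurable_fun setT (alpha t)) ->
  (forall t, (0 < t)%N -> forall w, 0 <= alpha t w <= 1) ->
  (forall t, (0 < t)%N -> Fmeas p alpha t.-1 (alpha t)) ->
  (* conditional super-uniformity: for null t and every F_{t-1}-measurable
     [0,1]-valued U, P(p_t <= U | F_{t-1}) <= U a.s., i.e.
     E[1{p_t <= U} 1_A] <= E[U 1_A] for all A in F_{t-1} *)
  (forall t, (0 < t)%N -> ~~ theta t ->
     forall U : T -> R, Fmeas p alpha t.-1 U -> (forall w, 0 <= U w <= 1) ->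
     forall A, Fsig p alpha t.-1 A ->
     (P (A `&` [set w | (p t w <= U w)%R]) <= \int[P]_(w in A) (U w)%:E)%E) ->
  (* (a) *)
  ((forall t, (0 < t)%N -> {ae P, forall w, memLevelSum p alpha dec t w <= alpha0}) ->
     forall t, (\int[P]_w (memFDP p alpha theta dec t w)%:E <= alpha0%:E)%E)
  /\
  (* (b) *)
  (forall lambda : nat -> T -> R,
     (forall t, (0 < t)%N -> measurable_fun setT (lambda t)) ->
     (forall t, (0 < t)%N -> forall w, 0 < lambda t w < 1) ->
     (forall t, (0 < t)%N -> Fmeas p alpha t.-1 (lambda t)) ->
     (forall t, (\int[P]_w (memFDPstar p alpha theta dec t w)%:E
                 <= \int[P]_w (memFDPhat p alpha lambda dec t w)%:E)%E)
     /\
     ((forall t, (0 < t)%N -> {ae P, forall w, memFDPhat p alpha lambda dec t w <= alpha0}) ->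
        forall t, (\int[P]_w (memFDP p alpha theta dec t w)%:E <= alpha0%:E)%E)).
Proof.
move=> /andP[a0 _] /andP[/ltW dec0 _] mp _ ma alpha01 Falpha superuniform.
have mdelta t : (0 < t)%N -> measurable_fun setT (delta p alpha t).
  by move=> t0; exact: measurable_fun_ler (mp t t0) (ma t t0).
split; first by apply: memFDR_le_of_memLevelSum => //; exact: ltW.
move=> lambda ml lambda01 Flambda; split; first exact: integral_memFDPstar_le_memFDPhat.
by apply: memFDR_le_of_memFDPhat => //; exact: ltW.
Qed.
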